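(* Let $(A\otimes V,\mu_{A\otimes V})$ be a weak crossed product with preunit $\nu$ and associated morphisms $\psi_V^A,\sigma_V^A$, let $B$ be an algebra, and let $i_A:A\rightarrow B$ be an algebra morphism and $i_V:V\rightarrow B$ a morphism. The following are equivalent. (i) There exists a unique algebra morphism $\omega:A\times V\rightarrow B$ such that $\omega\circ p_{A\otimes V}\circ\beta_\nu=i_A$ and $\omega\circ p_{A\otimes V}\circ(\eta_A\otimes V)=i_V$. (ii) $\mu_B\circ(i_A\otimes i_V)\circ\nu=\eta_B$, $\mu_B\circ(i_A\otimes i_V)\circ\psi_V^A=\mu_B\circ(i_V\otimes i_A)$ and $\mu_B\circ(i_A\otimes i_V)\circ\sigma_V^A=\mu_B\circ(i_V\otimes i_V)$.
   Context: $\mathcal C$ is a strict monoidal category with tensor product $\otimes$ and unit object $K$ in which every idempotent splits: for every $\nabla:Y\rightarrow Y$ with $\nabla\circ\nabla=\nabla$ there are an object $Z$ and morphisms $i:Z\rightarrow Y$, $p:Y\rightarrow Z$ with $\nabla=i\circ p$, $p\circ i=id_Z$ ($Z$ is the image of $\nabla$, $i$ the injection, $p$ the projection). We write $A\otimes f$ for $id_A\otimes f$. An algebra $A$ has unit $\eta_A$ and product $\mu_A$. Weak crossed products. Let $A$ be an algebra and $V$ an object, and let $\psi_V^A:V\otimes A\rightarrow A\otimes V$ satisfy $(\mu_A\otimes V)\circ(A\otimes\psi_V^A)\circ(\psi_V^A\otimes A)=\psi_V^A\circ(V\otimes\mu_A)$. Then $\nabla_{A\otimes V}=(\mu_A\otimes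 V)\circ(A\otimes\psi_V^A)\circ(A\otimes V\otimes\eta_A)$ is idempotent; $A\times V$ denotes its image, with injection $i_{A\otimes V}$ and projection $p_{A\otimes V}$. Let $\sigma_V^A:V\otimes V\rightarrow A\otimes V$ with $\nabla_{A\otimes V}\circ\sigma_V^A=\sigma_V^A$. The twisted condition is $(\mu_A\otimes V)\circ(A\otimes\psi_V^A)\circ(\sigma_V^A\otimes A)=(\mu_A\otimes V)\circ(A\otimes\sigma_V^A)\circ(\psi_V^A\otimes V)\circ(V\otimes\psi_V^A)$ and the cocycle condition is $(\mu_A\otimes V)\circ(A\otimes\sigma_V^A)\circ(\sigma_V^A\otimes V)=(\mu_A\otimes V)\circ(A\otimes\sigma_V^A)\circ(\psi_V^A\otimes V)\circ(V\otimes\sigma_V^A)$. Put $\mu_{A\otimes V}=(\mu_A\otimes V)\circ(\mu_A\otimes\sigma_V^A)\circ(A\otimes\psi_V^A\otimes V)$. If the twisted and cocycle conditions hold, $(A\otimes V,\mu_{A\otimes V})$ is called a weak crossed product. For $\nu:K\rightarrow A\otimes V$ put $\beta_\nu=(\mu_A\otimes V)\circ(A\otimes\nu)$. A weak crossed product with preunit $\nu$ is a weak crossed product such that $(\mu_A\otimes V)\circ(A\otimes\sigma_V^A)\circ(\psi_V^A\otimes V)\circ(V\otimes\nu)=\nabla_{A\otimes V}\circ(\eta_A\otimes V)$, $(\mu_A\otimes V)\circ(A\otimes\sigma_V^A)\circ(\nu\otimes V)=\nabla_{A\otimes V}\circ(\eta_A\otimes V)$ and $(\mu_A\otimes V)\circ(A\otimes\psi_V^A)\circ(\nu\otimes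 A)=\beta_\nu$. Then $A\times V$ is an algebra with product $\mu_{A\times V}=p_{A\otimes V}\circ\mu_{A\otimes V}\circ(i_{A\otimes V}\otimes i_{A\otimes V})$ and unit $p_{A\otimes V}\circ\nu$. *)

Set Implicit Arguments.
Unset Strict Implicit.

Record Cat := {
  Ob :> Type;
  Hom : Ob -> Ob -> Type;
  comp : forall {a b c : Ob}, Hom b c -> Hom a b -> Hom a c;
  idm : forall (a : Ob), Hom a a;
  comp_assoc : forall a b c d (f : Hom c d) (g : Hom b c) (h : Hom a b),
      comp f (comp g h) = comp (comp f g) h;
  comp_id_l : forall a b (f : Hom a b), comp (idm b) f = f;
  comp_id_r : forall a b (f : Hom a b), comp f (idm a) = f
}.
Arguments Hom {_} _ _.
Arguments comp {_ a b c} _ _ : rename.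
Arguments idm {_} _.

Definition eqcast {C : Cat} {x y : Ob C} (e : x = y) : Hom x y :=
  match e in _ = z return Hom x z with eq_refl => idm x end.

(** Strict monoidal categories: the tensor product is associative and unital
    on the nose on objects (Leibniz equality), and the (identity) associativity
    and unit constraints are natural; coherence is automatic since all
    constraint morphisms are identity casts. *)
Record SMCat := {
  smcat :> Cat;
  tens : Ob smcat -> Ob smcat -> Ob smcat;
  tensm : forall {a b c d : Ob smcat}, Hom a b -> Hom c d -> Hom (tens a c) (tens b d);
  unit : Ob smcat;
  tens_assoc : forall a b c, tens (tens a b) c = tens a (tens b c);
  tens_unit_l : forall a, tens unit a = a;
  tens_unit_r : forall a, tens a unit = a;
  tensm_id : forall a b, tensm (idm a) (idm b) = idm (tens a b);
  tensm_comp : forall a b c a' b' c' (f : Hom b c) (g : Hom a b)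
      (f' : Hom b' c') (g' : Hom a' b'),
      tensm (comp f g) (comp f' g') = comp (tensm f f') (tensm g g');
  tensm_assoc : forall a b c a' b' c' (f : Hom a a') (g : Hom b b') (h : Hom c c'),
      comp (eqcast (tens_assoc a' b' c')) (tensm (tensm f g) h)
      = comp (tensm f (tensm g h)) (eqcast (tens_assoc a b c));
  tensm_unit_l : forall a b (f : Hom a b),
      comp (eqcast (tens_unit_l b)) (tensm (idm unit) f) = comp f (eqcast (tens_unit_l a));
  tensm_unit_r : forall a b (f : Hom a b),
      comp (eqcast (tens_unit_r b)) (tensm f (idm unit)) = comp f (eqcast (tens_unit_r a))
}.
Arguments tens {s} _ _.
Arguments tensm {s a b c d} _ _.
Arguments unit {s}.

Section Defs.
Variable C : SMCat.

Local Notation "f \o g" := (comp f g) (at level 40, left associativity).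
Local Notation "x ⊗ y" := (tens x y) (at level 35, right associativity).
Local Notation "f ⊗m g" := (tensm f g) (at level 35, right associativity).

Definition asc (x y z : Ob C) : Hom (tens (tens x y) z) (tens x (tens y z)) :=
  eqcast (tens_assoc x y z).
Definition asci (x y z : Ob C) : Hom (tens x (tens y z)) (tens (tens x y) z) :=
  eqcast (eq_sym (tens_assoc x y z)).
Definition lunit_i (x : Ob C) : Hom x (tens unit x) := eqcast (eq_sym (tens_unit_l x)).
Definition runit_i (x : Ob C) : Hom x (tens x unit) := eqcast (eq_sym (tens_unit_r x)).
Definition lunit (x : Ob C) : Hom (tens unit x) x := eqcast (tens_unit_l x).
Definition runit (x : Ob C) : Hom (tens x unit) x := eqcast (tens_unit_r x).

Definition is_algebra (A : Ob C) (eta : Hom unit A) (mu : Hom (tens A A) A) : Prop :=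
  mu \o (mu ⊗m idm A) = mu \o (idm A ⊗m mu) \o asc A A A /\
  mu \o (eta ⊗m idm A) = lunit A /\
  mu \o (idm A ⊗m eta) = runit A.

Definition is_alg_morphism (A : Ob C) (etaA : Hom unit A) (muA : Hom (tens A A) A)
  (B : Ob C) (etaB : Hom unit B) (muB : Hom (tens B B) B) (f : Hom A B) : Prop :=
  f \o etaA = etaB /\ f \o muA = muB \o (f ⊗m f).

Section WCP.
Variables (A V : Ob C) (etaA : Hom unit A) (muA : Hom (tens A A) A).

(** ∇_{A⊗V} = (μ_A⊗V)∘(A⊗ψ)∘(A⊗V⊗η_A) *)
Definition nabla (psi : Hom (tens V A) (tens A V)) : Hom (tens A V) (tens A V) :=
  (muA ⊗m idm V) \o asci A A V \o (idm A ⊗m psi) \o asc A V A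
    \o (idm (tens A V) ⊗m etaA) \o runit_i (tens A V).

(** β_ν = (μ_A⊗V)∘(A⊗ν) *)
Definition beta_nu (nu : Hom unit (tens A V)) : Hom A (tens A V) :=
  (muA ⊗m idm V) \o asci A A V \o (idm A ⊗m nu) \o runit_i A.

(** μ_{A⊗V} = (μ_A⊗V)∘(μ_A⊗σ)∘(A⊗ψ⊗V) *)
Definition mu_AV (psi : Hom (tens V A) (tens A V)) (sigma : Hom (tens V V) (tens A V))
  : Hom (tens (tens A V) (tens A V)) (tens A V) :=
  (muA ⊗m idm V) \o asci A A V \o (muA ⊗m sigma) \o asci A A (tens V V)
   \o (idm A ⊗m asc A V V) \o asc A (tens A V) V \o ((idm A ⊗m psi) ⊗m idm V)
   \o asci A (tens V A) V \o (idm A ⊗m asci V A V) \o asc A V (tens A V).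

Definition psi_condition (psi : Hom (tens V A) (tens A V)) : Prop :=
  (muA ⊗m idm V) \o asci A A V \o (idm A ⊗m psi) \o asc A V A \o (psi ⊗m idm A)
  = psi \o (idm V ⊗m muA) \o asc V A A.

Definition twisted_condition psi sigma : Prop :=
  (muA ⊗m idm V) \o asci A A V \o (idm A ⊗m psi) \o asc A V A \o (sigma ⊗m idm A)
  = (muA ⊗m idm V) \o asci A A V \o (idm A ⊗m sigma) \o asc A V V \o (psi ⊗m idm V)
     \o asci V A V \o (idm V ⊗m psi) \o asc V V A.

Definition cocycle_condition psi (sigma : Hom (tens V V) (tens A V)) : Prop :=
  (muA ⊗m idm V) \o asci A A V \o (idm A ⊗m sigma) \o asc A V V \o (sigma ⊗m idm V)
  = (muA ⊗m idm V) \o asci A A V \o (idm A ⊗m sigma) \o asc A V V \o (psi ⊗m idm V)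
     \o asci V A V \o (idm V ⊗m sigma) \o asc V V V.

Definition weak_crossed_product psi sigma : Prop :=
  is_algebra etaA muA /\ psi_condition psi /\ nabla psi \o sigma = sigma /\
  twisted_condition psi sigma /\ cocycle_condition psi sigma.

Definition wcp_preunit psi sigma (nu : Hom unit (tens A V)) : Prop :=
  weak_crossed_product psi sigma /\
  (muA ⊗m idm V) \o asci A A V \o (idm A ⊗m sigma) \o asc A V V \o (psi ⊗m idm V)
     \o asci V A V \o (idm V ⊗m nu) \o runit_i V
   = nabla psi \o (etaA ⊗m idm V) \o lunit_i V /\
  (muA ⊗m idm V) \o asci A A V \o (idm A ⊗m sigma) \o asc A V V \o (nu ⊗m idm V)
     \o lunit_i V
   = nabla psi \o (etaA ⊗m idm V) \o lunit_i V /\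
  (muA ⊗m idm V) \o asci A A V \o (idm A ⊗m psi) \o asc A V A \o (nu ⊗m idm A)
     \o lunit_i A
   = beta_nu nu.

End WCP.

Definition splits (Y Z : Ob C) (e : Hom Y Y) (i : Hom Z Y) (p : Hom Y Z) : Prop :=
  e = i \o p /\ p \o i = idm Z.

Definition idempotents_split : Prop :=
  forall (Y : Ob C) (e : Hom Y Y), e \o e = e ->
    exists (Z : Ob C) (i : Hom Z Y) (p : Hom Y Z), splits e i p.

End Defs.

(* Write F = μ_B∘(i_A⊗i_V) and e = ψ(V⊗η_A) = ∇(η_A⊗V).  In A⊗V one has
   μ_{A⊗V}(β_ν⊗e) = ∇, μ_{A⊗V}(e⊗β_ν) = ψ and μ_{A⊗V}(e⊗e) = σ, so the image of ∇ is
   generated multiplicatively by β_ν and e.  Hence any algebra morphism ω with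
   ω∘p∘β_ν = i_A and ω∘p∘(η_A⊗V) = i_V satisfies ω∘p = F; this gives uniqueness, and
   applying ω∘p to the three identities yields (ii).  Conversely, under (ii) F absorbs
   ∇ and is multiplicative for μ_{A⊗V}, so ω = F∘i works. *)

From Stdlib Require Import List ProofIrrelevance ssreflect.
Import ListNotations.
Set Implicit Arguments.

Section Casts.
Context {C : Cat}.

Lemma eqcast_irrelevant (x y : Ob C) (e1 e2 : x = y) : eqcast e1 = eqcast e2.
Proof. by rewrite (proof_irrelevance _ e1 e2). Qed.

Lemma eqcast_id (x : Ob C) (e : x = x) : eqcast e = idm x.
Proof. by rewrite (proof_irrelevance _ e eq_refl). Qed.

Lemma eqcast_trans (x y z : Ob C) (e1 : x = y) (e2 : y = z) :
  comp (eqcast e2) (eqcast e1) = eqcast (eq_trans e1 e2).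
Proof. by destruct e2, e1; apply: comp_id_l. Qed.

Lemma comp_eqcast_trans (w x y z : Ob C) (e1 : x = y) (e2 : y = z) (f : Hom z w) :
  comp (comp f (eqcast e2)) (eqcast e1) = comp f (eqcast (eq_trans e1 e2)).
Proof. by rewrite -comp_assoc eqcast_trans. Qed.

Lemma congr_comp (a b c : Ob C) (f f' : Hom b c) (g g' : Hom a b) :
  f = f' -> g = g' -> comp f g = comp f' g'.
Proof. by move=> -> ->. Qed.

End Casts.

Ltac cast_normalize := repeat first [rewrite comp_assoc | rewrite comp_eqcast_trans
  | rewrite eqcast_trans | rewrite eqcast_id | rewrite comp_id_l | rewrite comp_id_r].
Ltac cast_congr := repeat first [reflexivity | apply eqcast_irrelevant | apply congr_comp].

(* Morphisms between tensor products of lists of objects, and the tensor of two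
   of them landing on concatenated lists: this hides the identity casts of the
   strict structure, so that string-diagram computations become rewriting. *)
Section ListTensor.
Context {C : SMCat}.

Fixpoint tens_list (l : list (Ob C)) : Ob C :=
  match l with
  | [] => unit
  | [x] => x
  | x :: l' => tens x (tens_list l')
  end.

Lemma tens_list_app l1 l2 : tens_list (l1 ++ l2) = tens (tens_list l1) (tens_list l2).
Proof.
  elim: l1 => [|x [|y l1] IH]; first by rewrite tens_unit_l.
  - by case: l2 IH => [|z l2] _; rewrite /= ?tens_unit_r.
  - change (tens x (tens_list ((y :: l1) ++ l2))
            = tens (tens x (tens_list (y :: l1))) (tens_list l2)).
    by rewrite IH tens_assoc.
Qed.

Definition HomL (l m : list (Ob C)) := Hom (tens_list l) (tens_list m).

Definition tensl_def {l1 m1 l2 m2} (f : HomL l1 m1) (g : HomL l2 m2) : HomL (l1 ++ l2) (m1 ++ m2) :=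
  comp (eqcast (eq_sym (tens_list_app m1 m2))) (comp (tensm f g) (eqcast (tens_list_app l1 l2))).
Fact tensl_key : Datatypes.unit. Proof. exact: tt. Qed.
Definition tensl {l1 m1 l2 m2} := locked_with tensl_key (@tensl_def l1 m1 l2 m2).

Lemma tenslE l1 m1 l2 m2 (f : HomL l1 m1) (g : HomL l2 m2) : tensl f g = tensl_def f g.
Proof. by rewrite /tensl unlock. Qed.

Local Notation I l := (idm (tens_list l)).
Local Notation "f \o g" := (comp f g) (at level 40, left associativity).
Local Notation "f ⊗m g" := (tensm f g) (at level 35, right associativity).

Lemma tensm_comp3_l (a b c d a' b' : Ob C) (f : Hom c d) (x : Hom b c) (g : Hom a b) (h : Hom a' b') :
  tensm (comp f (comp x g)) h = comp (tensm f (idm b')) (comp (tensm x h) (tensm g (idm a'))).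
Proof. by rewrite -!tensm_comp comp_id_l comp_id_r. Qed.

Lemma tensm_comp3_r (a b c d a' b' : Ob C) (f : Hom c d) (x : Hom b c) (g : Hom a b) (h : Hom a' b') :
  tensm h (comp f (comp x g)) = comp (tensm (idm b') f) (comp (tensm h x) (tensm (idm a') g)).
Proof. by rewrite -!tensm_comp comp_id_l comp_id_r. Qed.

Lemma tensm_eqcast_l (x y z : Ob C) (e : x = y) :
  tensm (eqcast e) (idm z) = eqcast (f_equal (fun t => tens t z) e).
Proof. by destruct e; apply: tensm_id. Qed.

Lemma tensm_eqcast_r (x y z : Ob C) (e : x = y) :
  tensm (idm z) (eqcast e) = eqcast (f_equal (fun t => tens z t) e).
Proof. by destruct e; apply: tensm_id. Qed.

Lemma tensm_assoc_inv (a b c a' b' c' : Ob C) (f : Hom a a') (g : Hom b b') (h : Hom c c') :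
  tensm (tensm f g) h = comp (eqcast (eq_sym (tens_assoc a' b' c')))
     (comp (tensm f (tensm g h)) (eqcast (tens_assoc a b c))).
Proof. by rewrite -tensm_assoc comp_assoc eqcast_trans eqcast_id comp_id_l. Qed.

Lemma tensl_comp l1 m1 n1 l2 m2 n2 (f : HomL m1 n1) (g : HomL m2 n2) (f' : HomL l1 m1) (g' : HomL l2 m2) :
  comp (tensl f g) (tensl f' g') = tensl (comp f f') (comp g g').
Proof. rewrite !tenslE /tensl_def tensm_comp; cast_normalize; cast_congr. Qed.

Lemma tensl_id l1 l2 : tensl (I l1) (I l2) = I (l1 ++ l2).
Proof. by rewrite tenslE /tensl_def tensm_id; cast_normalize. Qed.

Lemma tensl_assoc l1 l2 l3 m1 m2 m3 (f : HomL l1 m1) (g : HomL l2 m2) (h : HomL l3 m3) :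
  tensl (tensl f g) h = comp (eqcast (f_equal tens_list (app_assoc m1 m2 m3)))
    (comp (tensl f (tensl g h)) (eqcast (f_equal tens_list (eq_sym (app_assoc l1 l2 l3))))).
Proof.
  rewrite !tenslE /tensl_def !tensm_comp3_l !tensm_comp3_r !tensm_eqcast_l !tensm_eqcast_r.
  rewrite tensm_assoc_inv; cast_normalize; cast_congr.
Qed.

Lemma tensl_assoc_r l1 l2 l3 m1 m2 m3 (f : HomL l1 m1) (g : HomL l2 m2) (h : HomL l3 m3) :
  tensl f (tensl g h) = comp (eqcast (f_equal tens_list (eq_sym (app_assoc m1 m2 m3))))
    (comp (tensl (tensl f g) h) (eqcast (f_equal tens_list (app_assoc l1 l2 l3)))).
Proof. rewrite tensl_assoc; cast_normalize; cast_congr. Qed.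

Lemma tensl_unit_l l m (f : HomL l m) : @tensl [] [] l m (I []) f = f.
Proof.
  rewrite tenslE /tensl_def (eqcast_irrelevant (eq_sym (tens_list_app [] m)) (tens_unit_l (tens_list m))).
  by rewrite comp_assoc tensm_unit_l; cast_normalize.
Qed.

Lemma tensl_unit_r l m (f : HomL l m) : @tensl l m [] [] f (I []) =
  comp (eqcast (f_equal tens_list (eq_sym (app_nil_r m))))
   (comp f (eqcast (f_equal tens_list (app_nil_r l)))).
Proof.
  rewrite tenslE /tensl_def.
  transitivity (comp (eqcast (f_equal tens_list (eq_sym (app_nil_r m))))
    (comp (comp (eqcast (tens_unit_r (tens_list m))) (tensm f (idm unit))) (eqcast (tens_list_app l [])))).
  { cast_normalize; cast_congr. }
  rewrite tensm_unit_r; cast_normalize; cast_congr.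
Qed.

Lemma tensl_singleton (x y z w : Ob C) (f : Hom x y) (g : Hom z w) :
  @tensl [x] [y] [z] [w] f g = tensm f g.
Proof. by rewrite tenslE /tensl_def; cast_normalize. Qed.

Lemma tensl_seq_rl l1 m1 l2 m2 (f : HomL l1 m1) (g : HomL l2 m2) :
  tensl f g = comp (tensl f (I m2)) (tensl (I l1) g).
Proof. by rewrite tensl_comp comp_id_l comp_id_r. Qed.

Lemma tensl_seq_lr l1 m1 l2 m2 (f : HomL l1 m1) (g : HomL l2 m2) :
  tensl f g = comp (tensl (I m1) g) (tensl f (I l2)).
Proof. by rewrite tensl_comp comp_id_l comp_id_r. Qed.

Lemma tensl_comp_l l m n l2 m2 (f : HomL m n) (g : HomL l m) (h : HomL l2 m2) :
  tensl (comp f g) h = comp (tensl f (I m2)) (tensl g h).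
Proof. by rewrite tensl_comp comp_id_l. Qed.

Lemma tensl_comp_r l m n l1 m1 (f : HomL m n) (g : HomL l m) (h : HomL l1 m1) :
  tensl h (comp f g) = comp (tensl (I m1) f) (tensl h g).
Proof. by rewrite tensl_comp comp_id_l. Qed.

End ListTensor.

Arguments tensl_assoc {C l1 l2 l3 m1 m2 m3} f g h.
Arguments tensl_seq_rl {C l1 m1 l2 m2} f g.
Arguments tensl_seq_lr {C l1 m1 l2 m2} f g.

Local Notation I l := (idm (tens_list l)).
Local Notation "f \o g" := (comp f g) (at level 40, left associativity).
Local Notation "f ⊗m g" := (tensm f g) (at level 35, right associativity).

Section Chains.
Context {C : Cat}.

Lemma chain2_rewrite (a b c d : Ob C) (f1 : Hom b c) (f2 : Hom a b) (g : Hom a c) :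
  comp f1 f2 = g -> forall x : Hom c d, comp (comp x f1) f2 = comp x g.
Proof. by move=> H x; rewrite -comp_assoc H. Qed.

Lemma chain3_rewrite (a b c e d : Ob C) (f1 : Hom e c) (f2 : Hom b e) (f3 : Hom a b) (g : Hom a c) :
  comp (comp f1 f2) f3 = g -> forall x : Hom c d, comp (comp (comp x f1) f2) f3 = comp x g.
Proof. by move=> H x; rewrite -!comp_assoc -H !comp_assoc. Qed.

Lemma chain4_rewrite (a b c e e' d : Ob C) (f1 : Hom e c) (f2 : Hom e' e) (f3 : Hom b e')
  (f4 : Hom a b) (g : Hom a c) :
  comp (comp (comp f1 f2) f3) f4 = g ->
  forall x : Hom c d, comp (comp (comp (comp x f1) f2) f3) f4 = comp x g.
Proof. by move=> H x; rewrite -!comp_assoc -H !comp_assoc. Qed.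

End Chains.

Arguments chain2_rewrite {C a b c d f1 f2 g} H x.
Arguments chain3_rewrite {C a b c e d f1 f2 f3 g} H x.
Arguments chain4_rewrite {C a b c e e' d f1 f2 f3 f4 g} H x.

(* Composites are kept left-nested, [f0 \o f1 \o ... \o fn]; an equation whose
   left-hand side is such a chain is rewritten at any position of the goal. *)
Ltac rewrite_chain_core H := repeat rewrite comp_assoc;
  first [ rewrite (chain4_rewrite H)
        | rewrite (chain3_rewrite H) | rewrite (chain2_rewrite H) | rewrite H ];
  repeat rewrite comp_assoc.
Ltac rewrite_chain H := let H' := fresh in pose proof H as H';
  repeat rewrite comp_assoc in H'; cbv [app] in H'; rewrite_chain_core H'; clear H'.
Ltac rewrite_chain_rev H := let H' := fresh in pose proof (eq_sym H) as H';
  repeat rewrite comp_assoc in H'; cbv [app] in H'; rewrite_chain_core H'; clear H'.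
Ltac simpl_chain := repeat first [rewrite eqcast_id | rewrite comp_id_l | rewrite comp_id_r
  | rewrite comp_assoc]; cbv [app].

(* The following tactics act on the factors of the left-hand side of the goal,
   numbered from the right: factor 0 is the one applied first. *)
Ltac chain_prefix t k := lazymatch k with
  | 0 => t | S ?k' => lazymatch t with comp ?p _ => chain_prefix p k' end end.
Ltac chain_factor k := lazymatch goal with |- ?L = _ =>
  let S := chain_prefix L k in lazymatch S with comp _ ?F => F | _ => S end end.

(* [fuse k] merges factors k+1 and k, both tensor products, by interchange. *)
Ltac fuse k := lazymatch goal with |- ?L = _ =>
  let S := chain_prefix L k in
  lazymatch S with
  | comp (comp ?x (@tensl _ ?m1 ?n1 ?m2 ?n2 ?f ?g)) (@tensl _ ?l1 _ ?l2 _ ?f' ?g') =>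
      let E := fresh in pose proof (@tensl_comp _ l1 m1 n1 l2 m2 n2 f g f' g') as E;
      cbv [app] in E; rewrite (chain2_rewrite E); clear E
  | comp (@tensl _ ?m1 ?n1 ?m2 ?n2 ?f ?g) (@tensl _ ?l1 _ ?l2 _ ?f' ?g') =>
      rewrite (@tensl_comp _ l1 m1 n1 l2 m2 n2 f g f' g')
  end end; simpl_chain.
Ltac unfuse_rl k := lazymatch chain_factor k with
  @tensl _ ?a ?b ?c ?d ?f ?g => rewrite (@tensl_seq_rl _ a b c d f g) end; simpl_chain.
Ltac unfuse_lr k := lazymatch chain_factor k with
  @tensl _ ?a ?b ?c ?d ?f ?g => rewrite (@tensl_seq_lr _ a b c d f g) end; simpl_chain.
Ltac reassoc_l k := lazymatch chain_factor k with
  @tensl _ _ _ ?l3 ?m3 (@tensl _ ?l1 ?m1 ?l2 ?m2 ?f ?g) ?h =>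
    rewrite (@tensl_assoc _ l1 l2 l3 m1 m2 m3 f g h) end; simpl_chain.
Ltac reassoc_r k := lazymatch chain_factor k with
  @tensl _ ?l1 ?m1 _ _ ?f (@tensl _ ?l2 ?m2 ?l3 ?m3 ?g ?h) =>
    rewrite (@tensl_assoc_r _ l1 l2 l3 m1 m2 m3 f g h) end; simpl_chain.
Ltac distrib_l k := lazymatch chain_factor k with
  @tensl _ ?l ?n ?l2 ?m2 (@comp _ _ _ _ ?f ?g) ?h => rewrite (@tensl_comp_l _ l _ n l2 m2 f g h) end;
  simpl_chain.
Ltac distrib_r k := lazymatch chain_factor k with
  @tensl _ ?l1 ?m1 ?l ?n ?h (@comp _ _ _ _ ?f ?g) => rewrite (@tensl_comp_r _ l _ n l1 m1 f g h) end;
  simpl_chain.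

(* Turns a hypothesis [H : lhs = rhs] stated with [tensm] and structural casts
   into the goal, its list-tensor form, after precomposition with the cast [X]. *)
Ltac cast_solve :=
  rewrite ?tenslE /tensl_def /asc /asci /runit_i /lunit_i /runit /lunit; cast_normalize; cast_congr.
Ltac of_cast_form H X :=
  lazymatch type of H with ?oL = _ =>
    transitivity (comp oL X); [cast_solve | rewrite H; cast_solve] end.

Record list_algebra {C : SMCat} {X : Ob C} (eta : HomL [] [X]) (mu : HomL [X;X] [X]) : Prop := {
  lalg_assoc : comp mu (tensl mu (I [X])) = comp mu (tensl (I [X]) mu);
  lalg_unit_l : comp mu (@tensl _ [] [X] [X] [X] eta (I [X])) = I [X];
  lalg_unit_r : comp mu (@tensl _ [X] [X] [] [X] (I [X]) eta) = I [X] }.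

Lemma is_algebra_list {C : SMCat} (X : Ob C) (eta : HomL [] [X]) (mu : HomL [X;X] [X]) :
  @is_algebra C X eta mu -> list_algebra eta mu.
Proof.
  case=> Hassoc [Hunit_l Hunit_r]; split.
  - of_cast_form Hassoc (asci X X X).
  - of_cast_form Hunit_l (lunit_i X).
  - of_cast_form Hunit_r (runit_i X).
Qed.

(** * The calculus of a weak crossed product *)

Fact nabla_key : Datatypes.unit. Proof. exact: tt. Qed.

Section CrossedProduct.
Context {C : SMCat} (A V : Ob C).
Variables (etaA : HomL [] [A]) (muA : HomL [A;A] [A]) (psi : HomL [V;A] [A;V])
  (sigma : HomL [V;V] [A;V]) (nu : HomL [] [A;V]).

Hypothesis HA : @is_algebra C A etaA muA.
Hypothesis Hpsi : @psi_condition C A V muA psi.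
Hypothesis Hnabla_sigma : comp (@nabla C A V etaA muA psi) sigma = sigma.
Hypothesis Htwisted : @twisted_condition C A V muA psi sigma.
Hypothesis Hpreunit_r :
  (muA ⊗m idm V) \o asci A A V \o (idm A ⊗m sigma) \o asc A V V \o (psi ⊗m idm V)
    \o asci V A V \o (idm V ⊗m nu) \o runit_i V
  = @nabla C A V etaA muA psi \o (etaA ⊗m idm V) \o lunit_i V.
Hypothesis Hpreunit_l :
  (muA ⊗m idm V) \o asci A A V \o (idm A ⊗m sigma) \o asc A V V \o (nu ⊗m idm V) \o lunit_i V
  = @nabla C A V etaA muA psi \o (etaA ⊗m idm V) \o lunit_i V.
Hypothesis Hpreunit_psi :
  (muA ⊗m idm V) \o asci A A V \o (idm A ⊗m psi) \o asc A V A \o (nu ⊗m idm A) \o lunit_i A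
  = beta_nu muA nu.

(* Locked, so that rewriting never unfolds [nabla] into its defining chain. *)
Let nab : HomL [A;V] [A;V] := locked_with nabla_key (@nabla C A V etaA muA psi).
Let nabE : nab = @nabla C A V etaA muA psi. Proof. by rewrite /nab unlock. Qed.
Let mulA_assoc := lalg_assoc (is_algebra_list HA).
Let mulA_unit_l := lalg_unit_l (is_algebra_list HA).
Let mulA_unit_r := lalg_unit_r (is_algebra_list HA).

(* [act] is the left A-action on A⊗V, [embV = ψ(V⊗η_A)] (equal to [∇(η_A⊗V)]) and
   [beta = β_ν] are the inclusions of V and A, and [mulAV = μ_{A⊗V}]. *)
Local Notation act := (tensl muA (I [V])).
Local Notation unitV := (@tensl _ [] [A] [V] [V] etaA (I [V])).
Local Notation embV := (psi \o @tensl _ [V] [V] [] [A] (I [V]) etaA).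
Local Notation beta := (act \o @tensl _ [A] [A] [] [A;V] (I [A]) nu).
Local Notation mulAV := (act \o tensl muA sigma \o tensl (tensl (I [A]) psi) (I [V])).

Lemma nabla_eq : nab = act \o tensl (I [A]) psi \o @tensl _ [A;V] [A;V] [] [A] (I [A;V]) etaA.
Proof. rewrite nabE /nabla; cast_solve. Qed.

Lemma beta_nu_eq : beta_nu muA nu = beta.
Proof. rewrite /beta_nu; cast_solve. Qed.

Lemma psi_mul : act \o tensl (I [A]) psi \o tensl psi (I [A]) = psi \o tensl (I [V]) muA.
Proof. move: Hpsi; rewrite /psi_condition => H; of_cast_form H (asci V A A). Qed.

Lemma twisted : act \o tensl (I [A]) psi \o tensl sigma (I [A]) =
  act \o tensl (I [A]) sigma \o tensl psi (I [V]) \o tensl (I [V]) psi.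
Proof. move: Htwisted; rewrite /twisted_condition => H; of_cast_form H (asci V V A). Qed.

Lemma preunit_r : act \o tensl (I [A]) sigma \o tensl psi (I [V])
  \o @tensl _ [V] [V] [] [A;V] (I [V]) nu = nab \o unitV.
Proof. rewrite nabE; of_cast_form Hpreunit_r (idm V). Qed.

Lemma preunit_l : act \o tensl (I [A]) sigma \o @tensl _ [] [A;V] [V] [V] nu (I [V]) = nab \o unitV.
Proof. rewrite nabE; of_cast_form Hpreunit_l (idm V). Qed.

Lemma preunit_psi : act \o tensl (I [A]) psi \o @tensl _ [] [A;V] [A] [A] nu (I [A]) = beta.
Proof. rewrite -beta_nu_eq; of_cast_form Hpreunit_psi (idm A). Qed.

Lemma nabla_unitV : nab \o unitV = embV.
Proof.
  rewrite nabla_eq -{1}(tensl_id [A] [V]) (tensl_assoc (I [A]) (I [V]) etaA); simpl_chain.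
  fuse 0; fuse 0; unfuse_rl 0.
  rewrite tensl_unit_l -(tensl_id [A] [V]); simpl_chain.
  reassoc_r 2; fuse 2.
  by rewrite mulA_unit_l tensl_id; simpl_chain.
Qed.

Lemma act_nabla_unitV : act \o tensl (I [A]) (nab \o unitV) = nab.
Proof.
  rewrite nabla_unitV nabla_eq; distrib_r 0.
  by symmetry; rewrite -(tensl_id [A] [V]); reassoc_l 0.
Qed.

Lemma tensl_mulA_sigma : tensl muA sigma = tensl (I [A]) sigma \o tensl act (I [V]).
Proof. by symmetry; reassoc_l 0; rewrite tensl_id; fuse 0. Qed.

Lemma act_assoc : act \o tensl muA (I [A;V]) = act \o tensl (I [A]) act.
Proof.
  rewrite -(tensl_id [A] [V]); reassoc_r 0; fuse 0.
  by rewrite_chain mulA_assoc; distrib_l 0; reassoc_l 0.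
Qed.

Lemma act_mulA_sigma : act \o tensl muA sigma = act \o tensl (I [A]) (act \o tensl (I [A]) sigma).
Proof.
  unfuse_rl 0; rewrite_chain act_assoc.
  by rewrite -(tensl_id [A] [A]); reassoc_l 0; fuse 0.
Qed.

Lemma psi_embV : act \o tensl (I [A]) psi \o tensl embV (I [A]) = psi.
Proof.
  distrib_l 0; rewrite_chain psi_mul; reassoc_l 0; fuse 0.
  by rewrite mulA_unit_l tensl_id; simpl_chain.
Qed.

Lemma sigma_embV : act \o tensl (I [A]) sigma \o tensl psi (I [V]) \o tensl (I [V]) embV = sigma.
Proof.
  distrib_r 0; rewrite_chain_rev twisted; reassoc_r 0.
  rewrite tensl_id; fuse 0; unfuse_lr 0.
  rewrite tensl_unit_r; simpl_chain.
  by rewrite_chain_rev nabla_eq; rewrite nabE; exact: Hnabla_sigma.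
Qed.

Lemma nabla_psi : nab \o psi = psi.
Proof.
  rewrite nabla_eq.
  have unit_psi : tensl (I [A;V]) etaA \o psi = tensl psi (I [A]) \o tensl (I [V;A]) etaA.
  { rewrite -(tensl_seq_rl psi etaA) (tensl_seq_lr psi etaA) tensl_unit_r; simpl_chain.
    reflexivity. }
  rewrite_chain unit_psi; rewrite_chain psi_mul.
  rewrite -(tensl_id [V] [A]); reassoc_l 0; fuse 0.
  by rewrite mulA_unit_r tensl_id; simpl_chain.
Qed.

Lemma nabla_nu : nab \o nu = nu.
Proof.
  rewrite nabla_eq.
  have unit_nu : tensl (I [A;V]) etaA \o nu = @tensl _ [] [A;V] [A] [A] nu (I [A]) \o etaA.
  { transitivity (tensl nu etaA).
    - by rewrite (tensl_seq_lr nu etaA) tensl_unit_r; simpl_chain.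
    - by rewrite (tensl_seq_rl nu etaA) tensl_unit_l; simpl_chain. }
  rewrite_chain unit_nu; rewrite_chain preunit_psi.
  have nu_unit : @tensl _ [A] [A] [] [A;V] (I [A]) nu \o etaA = tensl etaA (I [A;V]) \o nu.
  { transitivity (tensl etaA nu).
    - by rewrite (tensl_seq_lr etaA nu) tensl_unit_r; simpl_chain.
    - by rewrite (tensl_seq_rl etaA nu) tensl_unit_l; simpl_chain. }
  rewrite_chain nu_unit; rewrite -(tensl_id [A] [V]); reassoc_r 1; fuse 1.
  by rewrite mulA_unit_l tensl_id; simpl_chain.
Qed.

Lemma nabla_act : nab \o act = act \o tensl (I [A]) nab.
Proof.
  have nabla_act_embV : nab = act \o tensl (I [A]) embV by rewrite -nabla_unitV act_nabla_unitV.
  rewrite nabla_act_embV; fuse 0.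
  symmetry; distrib_r 0; rewrite_chain_rev act_assoc.
  by reassoc_r 0; rewrite tensl_id; fuse 0.
Qed.

Lemma nabla_beta : nab \o act \o @tensl _ [A] [A] [] [A;V] (I [A]) nu = beta.
Proof. by rewrite_chain nabla_act; fuse 0; rewrite nabla_nu. Qed.

Lemma mulAV_embV_r : mulAV \o tensl (I [A;V]) embV = act \o tensl (I [A]) sigma.
Proof.
  rewrite_chain act_mulA_sigma; reassoc_l 1.
  rewrite -(tensl_id [A] [V]); reassoc_l 0; fuse 1; fuse 0.
  by rewrite sigma_embV.
Qed.

Lemma mulAV_embV_l l (Z : HomL l [A;V]) :
  mulAV \o tensl embV Z = act \o tensl (I [A]) sigma \o tensl psi (I [V]) \o tensl (I [V]) Z.
Proof.
  unfuse_rl 0; rewrite -(tensl_id [A] [V]); reassoc_r 1; fuse 1.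
  by rewrite_chain tensl_mulA_sigma; fuse 1; rewrite psi_embV.
Qed.

Lemma mulAV_embV_embV : mulAV \o tensl embV embV = sigma.
Proof. by rewrite mulAV_embV_l; exact: sigma_embV. Qed.

Lemma mulAV_embV_beta : mulAV \o tensl embV beta = psi.
Proof.
  rewrite mulAV_embV_l; distrib_r 0; reassoc_r 1; fuse 1.
  rewrite -psi_mul; simpl_chain; distrib_l 1; distrib_l 2.
  rewrite_chain_rev tensl_mulA_sigma; rewrite_chain act_mulA_sigma; reassoc_l 2; fuse 2.
  have psi_nu :
    tensl (tensl psi (I [A])) (I [V]) \o tensl (I [V]) (@tensl _ [A] [A] [] [A;V] (I [A]) nu)
    = tensl (I [A]) (@tensl _ [V] [V] [] [A;V] (I [V]) nu) \o psi.
  { transitivity (tensl psi nu).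
    - by reassoc_l 1; reassoc_r 0; rewrite !tensl_id; fuse 0.
    - symmetry; rewrite (tensl_seq_lr psi nu) tensl_unit_r; simpl_chain.
      by reassoc_r 1; rewrite tensl_id. }
  rewrite_chain psi_nu; fuse 1; rewrite preunit_r.
  by rewrite_chain act_nabla_unitV; exact: nabla_psi.
Qed.

Lemma mulAV_beta_embV : mulAV \o tensl beta embV = nab.
Proof.
  unfuse_lr 0; rewrite_chain mulAV_embV_r; distrib_l 0.
  rewrite_chain_rev tensl_mulA_sigma; rewrite_chain act_mulA_sigma; reassoc_l 0; fuse 0.
  by rewrite preunit_l; exact: act_nabla_unitV.
Qed.

Lemma unitV_eq : comp (tensm etaA (idm V)) (lunit_i V) = unitV.
Proof. cast_solve. Qed.

Lemma mu_AV_eq (X Y : Ob C) (f : HomL [X] [A;V]) (g : HomL [Y] [A;V]) :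
  comp (mu_AV muA psi sigma) (tensm f g) = mulAV \o tensl f g.
Proof.
  rewrite /mu_AV ?tenslE /tensl_def /asc /asci.
  rewrite ?tensm_comp3_l ?tensm_comp3_r ?tensm_eqcast_l ?tensm_eqcast_r; cast_normalize; cast_congr.
Qed.

(** * Morphisms out of the crossed product *)

Section Universal.
Variables (B : Ob C) (etaB : HomL [] [B]) (muB : HomL [B;B] [B]) (iA : HomL [A] [B])
  (iV : HomL [V] [B]).
Hypothesis HB : @is_algebra C B etaB muB.
Hypothesis HiA : @is_alg_morphism C A etaA muA B etaB muB iA.

Let mulB_assoc := lalg_assoc (is_algebra_list HB).
Let mulB_unit_l := lalg_unit_l (is_algebra_list HB).
Let mulB_unit_r := lalg_unit_r (is_algebra_list HB).

Local Notation F := (muB \o tensl iA iV).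

Lemma iA_mul : iA \o muA = muB \o tensl iA iA.
Proof. by rewrite tensl_singleton; case: HiA. Qed.

Lemma F_act : F \o act = muB \o tensl iA F.
Proof.
  fuse 0; rewrite iA_mul; distrib_l 0.
  by rewrite_chain mulB_assoc; reassoc_l 0; fuse 0.
Qed.

Lemma mulB_iV_iA_unit : muB \o tensl iV iA \o @tensl _ [V] [V] [] [A] (I [V]) etaA = iV.
Proof.
  fuse 0; rewrite (proj1 HiA); unfuse_lr 0.
  by rewrite tensl_unit_r; simpl_chain; rewrite mulB_unit_r; simpl_chain.
Qed.

Lemma F_unitV : F \o unitV = iV.
Proof.
  fuse 0; rewrite (proj1 HiA); unfuse_rl 0.
  by rewrite tensl_unit_l; rewrite_chain mulB_unit_l; simpl_chain.
Qed.

Section Conditions.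
Hypothesis F_nu : F \o nu = etaB.
Hypothesis F_psi : F \o psi = muB \o tensl iV iA.
Hypothesis F_sigma : F \o sigma = muB \o tensl iV iV.

Lemma F_nabla : F \o nab = F.
Proof.
  rewrite nabla_eq; rewrite_chain F_act; fuse 1; rewrite F_psi.
  by rewrite -(tensl_id [A] [V]); reassoc_l 0; fuse 0; rewrite mulB_iV_iA_unit.
Qed.

Lemma F_beta : F \o act \o @tensl _ [A] [A] [] [A;V] (I [A]) nu = iA.
Proof.
  rewrite_chain F_act; fuse 0; rewrite F_nu; unfuse_lr 0.
  by rewrite tensl_unit_r; simpl_chain; rewrite mulB_unit_r; simpl_chain.
Qed.

Lemma F_mulAV : F \o mulAV = muB \o tensl F F.
Proof.
  have F_act_sigma : F \o act \o tensl (I [A]) sigma = muB \o tensl iA (muB \o tensl iV iV).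
  { by rewrite_chain F_act; fuse 0; rewrite F_sigma. }
  have mulB_psi_V : muB \o tensl iA (muB \o tensl iV iV) \o tensl psi (I [V]) = muB \o tensl iV F.
  { distrib_r 1; rewrite_chain_rev mulB_assoc; reassoc_r 1; fuse 1; fuse 0.
    by rewrite F_psi; distrib_l 0; rewrite_chain mulB_assoc; reassoc_l 0; fuse 0. }
  rewrite_chain act_mulA_sigma; rewrite_chain F_act; fuse 1; rewrite F_act_sigma.
  reassoc_l 0; fuse 0; rewrite mulB_psi_V.
  by symmetry; distrib_l 0; rewrite_chain mulB_assoc; reassoc_l 0; fuse 0.
Qed.

End Conditions.

Section Image.
Variables (AxV : Ob C) (inj : HomL [AxV] [A;V]) (proj : HomL [A;V] [AxV]).
Hypothesis Himg : splits (@nabla C A V etaA muA psi) inj proj.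

Let nabla_split : nab = inj \o proj := eq_trans nabE (proj1 Himg).
Let proj_inj : proj \o inj = I [AxV] := proj2 Himg.

Lemma proj_nabla : proj \o nab = proj.
Proof. by rewrite nabla_split; rewrite_chain proj_inj; simpl_chain. Qed.

Let spec (om : HomL [AxV] [B]) : Prop :=
  @is_alg_morphism C AxV (comp proj nu) (comp proj (comp (mu_AV muA psi sigma) (tensm inj inj)))
    B etaB muB om /\
  comp om (comp proj (beta_nu muA nu)) = iA /\
  comp om (comp proj (comp (tensm etaA (idm V)) (lunit_i V))) = iV.

Lemma specE (om : HomL [AxV] [B]) : spec om <->
  ((om \o proj \o nu = etaB /\
    om \o proj \o mulAV \o tensl inj inj = muB \o @tensl _ [AxV] [B] [AxV] [B] om om) /\
   om \o proj \o beta = iA /\ om \o proj \o unitV = iV).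
Proof.
  by rewrite /spec /is_alg_morphism mu_AV_eq beta_nu_eq unitV_eq -tensl_singleton !comp_assoc.
Qed.

(* Since [nab = inj \o proj], multiplicativity of [om] on [A×V] applies to any pair
   of morphisms into the image of [nab]. *)
Lemma mul_through_proj {om : HomL [AxV] [B]}
  (Hmul : om \o proj \o mulAV \o tensl inj inj = muB \o @tensl _ [AxV] [B] [AxV] [B] om om)
  l1 l2 (X : HomL l1 [A;V]) (Y : HomL l2 [A;V]) :
  muB \o tensl (om \o proj \o X) (om \o proj \o Y)
  = om \o proj \o mulAV \o tensl (nab \o X) (nab \o Y).
Proof.
  symmetry; rewrite nabla_split.
  have tensl_split :
    tensl (inj \o proj \o X) (inj \o proj \o Y) = tensl inj inj \o tensl (proj \o X) (proj \o Y).
  { by rewrite tensl_comp !comp_assoc. }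
  by rewrite_chain tensl_split; rewrite_chain Hmul; fuse 0.
Qed.

Lemma spec_factors (om : HomL [AxV] [B]) : spec om -> om \o proj = F.
Proof.
  case/specE=> [[_ Hmul] [Hbeta HunitV]].
  rewrite -Hbeta -HunitV (mul_through_proj Hmul); simpl_chain.
  rewrite nabla_beta nabla_unitV; rewrite_chain mulAV_beta_embV.
  by rewrite_chain proj_nabla.
Qed.

Lemma conditions_of_spec (om : HomL [AxV] [B]) : spec om ->
  F \o nu = etaB /\ F \o psi = muB \o tensl iV iA /\ F \o sigma = muB \o tensl iV iV.
Proof.
  move=> Hspec; rewrite -(spec_factors Hspec).
  case/specE: Hspec => [[Hunit Hmul] [Hbeta HunitV]].
  split; [exact: Hunit | split].
  - rewrite -Hbeta -HunitV (mul_through_proj Hmul); simpl_chain.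
    by rewrite nabla_unitV nabla_beta; rewrite_chain mulAV_embV_beta.
  - rewrite -HunitV (mul_through_proj Hmul); simpl_chain.
    by rewrite nabla_unitV; rewrite_chain mulAV_embV_embV.
Qed.

Lemma spec_of_conditions :
  F \o nu = etaB -> F \o psi = muB \o tensl iV iA -> F \o sigma = muB \o tensl iV iV ->
  spec (F \o inj).
Proof.
  move=> F_nu F_psi F_sigma; apply/specE; simpl_chain.
  have F_nab := F_nabla F_psi.
  rewrite_chain_rev nabla_split; rewrite_chain F_nab.
  split; [split|split].
  - exact: F_nu.
  - by rewrite_chain (F_mulAV F_psi F_sigma); fuse 0.
  - exact: (F_beta F_nu).
  - exact: F_unitV.
Qed.

Lemma universal_property :
  (exists! om : HomL [AxV] [B], spec om) <->
  (comp muB (comp (tensm iA iV) nu) = etaB /\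
   comp muB (comp (tensm iA iV) psi) = comp muB (tensm iV iA) /\
   comp muB (comp (tensm iA iV) sigma) = comp muB (tensm iV iV)).
Proof.
  rewrite -(@tensl_singleton C A B V B iA iV) -(@tensl_singleton C V B A B iV iA).
  rewrite -(@tensl_singleton C V B V B iV iV) !(comp_assoc muB).
  split.
  - by case=> om [/conditions_of_spec].
  - case=> F_nu [F_psi F_sigma].
    exists (F \o inj); split; first exact: spec_of_conditions.
    move=> om /spec_factors <-.
    by rewrite_chain proj_inj; simpl_chain.
Qed.

End Image.
End Universal.
End CrossedProduct.

Theorem theorem1p7 (C : SMCat) (Hsplit : idempotents_split C)
  (A V : Ob C) (etaA : Hom unit A) (muA : Hom (tens A A) A)
  (psi : Hom (tens V A) (tens A V)) (sigma : Hom (tens V V) (tens A V))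
  (nu : Hom unit (tens A V))
  (Hwcp : wcp_preunit etaA muA psi sigma nu)
  (AxV : Ob C) (iAV : Hom AxV (tens A V)) (pAV : Hom (tens A V) AxV)
  (Himg : splits (nabla etaA muA psi) iAV pAV)
  (B : Ob C) (etaB : Hom unit B) (muB : Hom (tens B B) B)
  (HB : is_algebra etaB muB)
  (iA : Hom A B) (iV : Hom V B)
  (HiA : is_alg_morphism etaA muA etaB muB iA) :
  (exists! omega : Hom AxV B,
      is_alg_morphism (comp pAV nu)
        (comp pAV (comp (mu_AV muA psi sigma) (tensm iAV iAV)))
        etaB muB omega /\
      comp omega (comp pAV (beta_nu muA nu)) = iA /\
      comp omega (comp pAV (comp (tensm etaA (idm V)) (lunit_i V))) = iV)
  <->
  (comp muB (comp (tensm iA iV) nu) = etaB /\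
   comp muB (comp (tensm iA iV) psi) = comp muB (tensm iV iA) /\
   comp muB (comp (tensm iA iV) sigma) = comp muB (tensm iV iV)).
Proof.
  case: Hwcp => [[HA [Hpsi [Hnabla_sigma [Htwisted _]]]] [Hpre_r [Hpre_l Hpre_psi]]].
  exact: (universal_property nu HA Hpsi Hnabla_sigma Htwisted Hpre_r Hpre_l Hpre_psi iV HB HiA Himg).
Qed.
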